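(* Let ${\bf u}\in\mathcal A^{\mathbb N}$ have its language closed under reversal. If $D({\bf u})<+\infty$, then there exists an integer $K$ such that every bispecial factor $w$ of ${\bf u}$ with $|w|\ge K$ satisfies $m(w)=0$ if $w\ne\widetilde w$, and $m(w)=\#E^=(w)-1$ if $w=\widetilde w$.
   Context: $\widetilde w$ is the reversal of $w$. Palindromic defect: for a finite word $w$ of length $n$, $D(w)=n+1-$(number of distinct palindromic factors of $w$, including the empty word), and $D({\bf u})=\sup D(w)$ over factors of ${\bf u}$. The language is closed under reversal if the reversal of every factor is a factor. For a factor $w$: $E^+(w)=\{b: wb\text{ factor}\}$, $E^-(w)=\{a: aw\text{ factor}\}$, $E(w)=\{(a,b): awb\text{ factor}\}$, $E^=(w)=\{a: awa\text{ factor}\}$, $m(w)=\#E(w)-\#E^+(w)-\#E^-(w)+1$. A factor is bispecial if $\#E^-(w)\ge2$ and $\#E^+(w)\ge 2$. *)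

From mathcomp Require Import all_boot all_order all_algebra.
From mathcomp Require Import boolp.
Set Implicit Arguments. Unset Strict Implicit. Unset Printing Implicit Defensive.

Section Words.
Variable A : finType.

Definition factor (u : nat -> A) (w : seq A) : Prop :=
  exists i : nat, w = [seq u (i + k) | k <- iota 0 (size w)].

Definition closed_under_reversal (u : nat -> A) : Prop :=
  forall w, factor u w -> factor u (rev w).

(* All (distinct) factors of a finite word, including the empty word. *)
Definition fin_factors (w : seq A) : seq (seq A) :=
  undup [seq take j (drop i w) | i <- iota 0 (size w).+1,
                                 j <- iota 0 (size w - i).+1].

Definition is_pal (v : seq A) : bool := v == rev v.

Definition pal_defect (w : seq A) : nat :=
  (size w).+1 - count is_pal (fin_factors w).

Definition finite_defect (u : nat -> A) : Prop :=
  exists B : nat, forall w, factor u w -> pal_defect w <= B.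

Definition Eright (u : nat -> A) (w : seq A) : {set A} :=
  [set b : A | `[< factor u (rcons w b) >]].
Definition Eleft (u : nat -> A) (w : seq A) : {set A} :=
  [set a : A | `[< factor u (a :: w) >]].
Definition Eboth (u : nat -> A) (w : seq A) : {set A * A} :=
  [set p : A * A | `[< factor u (p.1 :: rcons w p.2) >]].
Definition Eeq (u : nat -> A) (w : seq A) : {set A} :=
  [set a : A | `[< factor u (a :: rcons w a) >]].

Definition bilat_mult (u : nat -> A) (w : seq A) : int :=
  (#|Eboth u w|%:Z - #|Eright u w|%:Z - #|Eleft u w|%:Z + 1)%R.

Definition bispecial (u : nat -> A) (w : seq A) : Prop :=
  factor u w /\ 2 <= #|Eleft u w| /\ 2 <= #|Eright u w|.

End Words.

(* Bounded defect means that, from some length N on, the longest palindromic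
   suffix of a prefix of u never occurs earlier in that prefix.  Consequently
   every complete return word to {f, rev f} with |f| > N is a palindrome.

   Follow the occurrences of a bispecial w with |w| > N and of rev w in u, and
   record how each one is entered and left: the letter before an occurrence of
   w is a left extension of w, the letter before an occurrence of rev w a right
   one, and dually for the letter after.  This walk runs on the left and right
   extensions of w and its steps are the bilateral extensions.  Applying the
   palindromicity of return words to the one-letter extensions of w shows that
   each first return to a vertex retraces the step by which the walk left it,
   so the graph the walk covers is a tree.  Counting its vertices and edges
   gives m(w); when w is a palindrome the left and right vertices merge and
   the letters of E^=(w) become loops. *)

From mathcomp Require Import all_boot all_order all_algebra.
From mathcomp Require Import boolp zify.
Set Implicit Arguments. Unset Strict Implicit. Unset Printing Implicit Defensive.

Section Slices.
Variables (A : finType) (u : nat -> A).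

Definition slice i l : seq A := mkseq (fun k => u (i + k)) l.

Lemma size_slice i l : size (slice i l) = l.
Proof. exact: size_mkseq. Qed.

Lemma nth_slice x0 i l k : k < l -> nth x0 (slice i l) k = u (i + k).
Proof. exact: nth_mkseq. Qed.

Lemma factor_slice i l : factor u (slice i l).
Proof. by exists i; rewrite size_slice. Qed.

Lemma slice_eqP i j l :
  reflect (forall k, k < l -> u (i + k) = u (j + k)) (slice i l == slice j l).
Proof.
apply: (iffP eqP) => [h k lt_kl | h].
  by rewrite -(nth_slice (u 0) i lt_kl) h nth_slice.
apply: (@eq_from_nth _ (u 0)); rewrite ?size_slice // => k lt_kl.
by rewrite !nth_slice // h.
Qed.

Lemma slice_revP i j l :
  reflect (forall k, k < l -> u (i + k) = u (j + (l - 1 - k)))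
          (slice i l == rev (slice j l)).
Proof.
apply: (iffP eqP) => [h k lt_kl | h].
  rewrite -(nth_slice (u 0) i lt_kl) h nth_rev size_slice // nth_slice; [congr (u _) | ]; lia.
apply: (@eq_from_nth _ (u 0)); rewrite ?size_rev ?size_slice // => k lt_kl.
rewrite nth_rev size_slice // !nth_slice ?h //; [congr (u _) | ]; lia.
Qed.

Lemma pal_sliceP i l :
  reflect (forall k, k < l -> u (i + k) = u (i + (l - 1 - k))) (is_pal (slice i l)).
Proof. exact: slice_revP. Qed.

Lemma slice_cons i l : slice i l.+1 = u i :: slice i.+1 l.
Proof.
rewrite /slice /mkseq /= addn0 -[1]/(1 + 0) iotaDl -map_comp.
by congr (_ :: _); apply: eq_map => k /=; rewrite add1n addSnnS.
Qed.

Lemma slice_rcons i l : slice i l.+1 = rcons (slice i l) (u (i + l)).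
Proof. exact: mkseqS. Qed.

Lemma slice_sub i l j l' : j + l' <= l -> slice (i + j) l' = take l' (drop j (slice i l)).
Proof.
move=> le_jl; have size_sub : size (take l' (drop j (slice i l))) = l'.
  by rewrite size_takel // size_drop size_slice; lia.
apply: (@eq_from_nth _ (u 0)); rewrite ?size_sub ?size_slice // => k lt_kl.
rewrite nth_take // nth_drop !nth_slice ?addnA //; lia.
Qed.

Lemma pal_slice_inner i l : is_pal (slice i l.+2) -> is_pal (slice i.+1 l).
Proof.
move=> /pal_sliceP pal_l; apply/pal_sliceP => k lt_kl.
by rewrite addSnnS pal_l; [congr (u _) | ]; lia.
Qed.

Lemma slice_shift a b len k l :
  slice a len = slice b len -> k + l <= len -> slice (a + k) l = slice (b + k) l.
Proof.
move=> /eqP/slice_eqP eq_ab le_len; apply/eqP/slice_eqP => r lt_rl.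
by rewrite -!addnA eq_ab //; lia.
Qed.

Lemma slice_shift_rev a b len k l :
  slice a len = rev (slice b len) -> k + l <= len ->
  slice (a + k) l = rev (slice (b + (len - l - k)) l).
Proof.
move=> /eqP/slice_revP eq_ab le_len; apply/eqP/slice_revP => r lt_rl.
rewrite -addnA eq_ab; [congr (u _) | ]; lia.
Qed.

End Slices.

Section PalindromicPrefixes.
Variables (A : finType) (u : nat -> A).
Local Notation slice := (slice u).

Definition pal_suffix e l := (l <= e) && is_pal (slice (e - l) l).

Lemma pal_suffix0 e : pal_suffix e 0.
Proof. by []. Qed.

Lemma pal_suffix_le e l : pal_suffix e l -> l <= e.
Proof. by case/andP. Qed.

Definition lps e := ex_maxn (ex_intro _ 0 (pal_suffix0 e)) (@pal_suffix_le e).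

Lemma pal_suffix_lps e : pal_suffix e (lps e).
Proof. by rewrite /lps; case: ex_maxnP. Qed.

Lemma leq_lps e l : pal_suffix e l -> l <= lps e.
Proof. by rewrite /lps; case: ex_maxnP => m _; apply. Qed.

Definition pal_factors e := [seq v <- fin_factors (slice 0 e) | is_pal v].

Lemma mem_fin_factors_slice e v :
  reflect (exists2 i, i + size v <= e & v = slice i (size v))
          (v \in fin_factors (slice 0 e)).
Proof.
rewrite /fin_factors mem_undup size_slice; apply: (iffP allpairsPdep).
  move=> [i [l [+ + ->]]]; rewrite !mem_iota !add0n => lt_ie lt_l.
  rewrite size_takel; last by rewrite size_drop size_slice; lia.
  exists i; first lia.
  by rewrite -(@slice_sub _ _ 0 e) //; lia.
move=> [i le_ie ->]; exists i, (size (slice i (size v))).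
rewrite !mem_iota size_slice -(@slice_sub _ _ 0 e) //.
by split; [lia | lia | ].
Qed.

Lemma pal_factors_uniq e : uniq (pal_factors e).
Proof. by rewrite filter_uniq // undup_uniq. Qed.

Lemma pal_factors_subS e : {subset pal_factors e <= pal_factors e.+1}.
Proof.
move=> v; rewrite !mem_filter => /andP[-> /mem_fin_factors_slice[i le_ie eq_v]].
by apply/mem_fin_factors_slice; exists i => //; lia.
Qed.

Lemma pal_factorsS e (v : seq A) : v \in pal_factors e.+1 ->
  v \in slice (e.+1 - lps e.+1) (lps e.+1) :: pal_factors e.
Proof.
rewrite inE !mem_filter => /andP[pal_v /mem_fin_factors_slice[i le_ie eq_v]].
rewrite pal_v /=; case: (leqP (i + size v) e) => [le_e | gt_e].
  by apply/orP; right; apply/mem_fin_factors_slice; exists i.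
have def_i : i = e.+1 - size v by lia.
have /andP[le_lps pal_lps] := pal_suffix_lps e.+1.
have le_v : size v <= lps e.+1 by apply: leq_lps; rewrite /pal_suffix -def_i -eq_v pal_v; lia.
move: le_v; rewrite leq_eqVlt => /orP[/eqP eq_size | lt_v].
  by rewrite eq_v def_i eq_size eqxx.
(* A shorter palindromic suffix is reflected inside the longest one, so it occurs earlier. *)
apply/orP; right; apply/mem_fin_factors_slice; exists (e.+1 - lps e.+1); first by lia.
have reflect_v := slice_shift_rev (k := 0) (l := size v) (eqP pal_lps).
rewrite addn0 in reflect_v; rewrite reflect_v; last by lia.
by rewrite (_ : _ + _ = i) -?eq_v; [apply/eqP | lia].
Qed.

Lemma size_pal_factorsS e :
  size (pal_factors e) <= size (pal_factors e.+1) <= (size (pal_factors e)).+1.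
Proof.
apply/andP; split; first exact: uniq_leq_size (pal_factors_uniq e) (@pal_factors_subS e).
exact: uniq_leq_size (pal_factors_uniq e.+1) (@pal_factorsS e).
Qed.

Lemma size_pal_factors e : size (pal_factors e) <= e.+1.
Proof. by elim: e => [// | e IHe]; have := size_pal_factorsS e; lia. Qed.

Lemma pal_defect_prefix e : pal_defect (slice 0 e) = e.+1 - size (pal_factors e).
Proof. by rewrite /pal_defect size_slice size_filter. Qed.

Lemma lps_fresh e x : size (pal_factors e) < size (pal_factors e.+1) ->
  x + lps e.+1 <= e -> slice x (lps e.+1) != slice (e.+1 - lps e.+1) (lps e.+1).
Proof.
move=> grow le_x; apply: contraTneq grow => eq_x; rewrite -leqNgt.
apply: uniq_leq_size (pal_factors_uniq _) _ => v /pal_factorsS.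
rewrite inE => /orP[/eqP -> | //]; rewrite mem_filter.
have /andP[_ ->] := pal_suffix_lps e.+1.
by apply/mem_fin_factors_slice; exists x; rewrite size_slice -?eq_x.
Qed.

End PalindromicPrefixes.

Lemma nondecreasing_bounded_stable (f : nat -> nat) B :
  (forall e, f e <= f e.+1) -> (forall e, f e <= B) ->
  exists N, forall e, N <= e -> f e = f N.
Proof.
move=> f_homo f_le.
have exP : exists k, `[< exists e, f e = k >] by exists (f 0); apply/asboolP; exists 0.
have ubP k : `[< exists e, f e = k >] -> k <= B by move/asboolP=> [e <-].
case: (ex_maxnP exP ubP) => k /asboolP[N f_N] k_max; exists N => e le_Ne.
apply/eqP; rewrite eqn_leq (homo_leq leqnn (fun _ _ _ => @leq_trans _ _ _) f_homo le_Ne).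
by rewrite f_N k_max //; apply/asboolP; exists e.
Qed.

Lemma lps_eventually_unioccurrent (A : finType) (u : nat -> A) : finite_defect u ->
  exists N, forall e x, N < e -> x + lps u e < e ->
    slice u x (lps u e) != slice u (e - lps u e) (lps u e).
Proof.
move=> [B defect_le]; pose D e := pal_defect (slice u 0 e).
have D_homo e : D e <= D e.+1.
  by rewrite /D !pal_defect_prefix; have := size_pal_factorsS u e; lia.
have D_le e : D e <= B by apply/defect_le/factor_slice.
have [N D_N] := nondecreasing_bounded_stable D_homo D_le.
exists N => -[// | e] x lt_Ne lt_x; apply: lps_fresh; last by lia.
have := D_N e; have := D_N e.+1; have := size_pal_factors u e.
by rewrite /D !pal_defect_prefix; lia.
Qed.

Section ReturnWords.
Variables (A : finType) (u : nat -> A).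
Local Notation slice := (slice u).
Local Notation lps := (lps u).

Lemma rev_mem_pair (f x : seq A) : (rev x \in [:: f; rev f]) = (x \in [:: f; rev f]).
Proof. by rewrite !inE (can2_eq revK revK) (inj_eq (can_inj revK)) orbC. Qed.

Lemma mem_pair_eqVrev (f x y : seq A) : x \in [:: f; rev f] -> y \in [:: f; rev f] ->
  x = y \/ x = rev y.
Proof. by rewrite !inE => /orP[]/eqP-> /orP[]/eqP->; rewrite ?revK; tauto. Qed.

Lemma mem_pair_orient_inj (f x y : seq A) : x \in [:: f; rev f] -> y \in [:: f; rev f] ->
  (x == f) = (y == f) -> x = y.
Proof.
move=> x_in y_in; case: (eqVneq x f) => [-> | ne_x]; case: (eqVneq y f) => [-> | ne_y] //.
by move: x_in y_in; rewrite !inE (negbTE ne_x) (negbTE ne_y) => /eqP-> /eqP->.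
Qed.

Definition occ (f : seq A) k := slice k (size f) \in [:: f; rev f].

Lemma occ_shift f a b len k : slice a len = slice b len -> k + size f <= len ->
  occ f (a + k) = occ f (b + k).
Proof. by move=> eq_ab le_len; rewrite /occ (slice_shift eq_ab). Qed.

Lemma occ_shift_rev f a b len k : slice a len = rev (slice b len) ->
  k + size f <= len -> occ f (a + k) = occ f (b + (len - size f - k)).
Proof. by move=> eq_ab le_len; rewrite /occ (slice_shift_rev eq_ab) ?rev_mem_pair. Qed.

Definition consecutive_occ f i j :=
  [/\ i < j, occ f i, occ f j & forall k, i < k < j -> ~~ occ f k].

Lemma consecutive_occ_shift f i j q : consecutive_occ f i j ->
  occ (slice i (j + size f - i)) q -> consecutive_occ f q (q + (j - i)).
Proof.
case=> lt_ij occ_i occ_j no_occ; set len := j + size f - i.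
rewrite /occ size_slice => /mem_pair_eqVrev /(_ (mem_head _ _)) [eq_q | eq_q].
- have occ_qk k : k <= j - i -> occ f (q + k) = occ f (i + k).
    by move=> le_k; apply: occ_shift eq_q _; lia.
  split; first lia.
  + by rewrite -(addn0 q) occ_qk ?addn0.
  + by rewrite occ_qk // subnKC // ltnW.
  + by move=> k lt_k; rewrite -(subnKC (ltnW (proj1 (andP lt_k)))) occ_qk ?no_occ; lia.
- have occ_qk k : k <= j - i -> occ f (q + k) = occ f (i + (j - i - k)).
    by move=> le_k; rewrite (occ_shift_rev eq_q); [congr (occ f (i + _)) | ]; lia.
  split; first lia.
  + by rewrite -(addn0 q) occ_qk // subn0 subnKC // ltnW.
  + by rewrite occ_qk // subnn addn0.
  + move=> k lt_k; rewrite -(subnKC (ltnW (proj1 (andP lt_k)))) occ_qk; last lia.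
    by apply: no_occ; lia.
Qed.

Variable N : nat.
Hypothesis lps_unioccurrent : forall e x, N < e -> x + lps e < e ->
  slice x (lps e) != slice (e - lps e) (lps e).

Lemma lps_gt_occ f q e : N < e -> size f <= e -> occ f q -> occ f (e - size f) ->
  q + size f < e -> size f < lps e.
Proof.
move=> lt_Ne le_fe occ_q occ_e lt_qe; rewrite ltnNge; apply/negP => le_lps.
have /andP[_ /eqP pal_lps] := pal_suffix_lps u e.
case: (mem_pair_eqVrev occ_q occ_e) => eq_q.
- have lt_x : q + (size f - lps e) + lps e < e by lia.
  move: (lps_unioccurrent lt_Ne lt_x); rewrite (slice_shift eq_q); last lia.
  by rewrite (_ : _ + _ = e - lps e) ?eqxx //; lia.
- have lt_x : q + 0 + lps e < e by lia.
  move: (lps_unioccurrent lt_Ne lt_x); rewrite (slice_shift_rev eq_q); last lia.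
  by rewrite (_ : _ + _ = e - lps e) -?pal_lps ?eqxx //; lia.
Qed.

(* Let q be the first occurrence of the return word z or of rev z.  The longest
   palindromic suffix of u[0, q + |z|) is longer than f by [lps_gt_occ]; if it
   were shorter than z it would reflect the final f inside z, and if it were
   longer it would reflect z to an earlier position.  So it is z itself. *)
Lemma consecutive_occ_pal f i j : N < size f -> consecutive_occ f i j ->
  is_pal (slice i (j + size f - i)).
Proof.
move=> lt_Nf ret; have lt_ij : i < j by case: ret.
set len := j + size f - i; set z := slice i len.
have size_z : size z = len by rewrite size_slice.
have occ_zi : occ z i by rewrite /occ size_z mem_head.
case: (ex_minnP (ex_intro _ i occ_zi)) => q occ_zq q_min.
case: (consecutive_occ_shift ret occ_zq) => _ occ_q occ_qj no_occ.
set e := q + len.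
have lt_lps : size f < lps e.
  apply: (@lps_gt_occ f q) => //; try lia.
  by rewrite (_ : e - size f = q + (j - i)) //; lia.
have /andP[le_lps /eqP pal_lps] := pal_suffix_lps u e.
case: (ltngtP (lps e) len) => [lt_len | gt_len | eq_len].
- have : occ f (e - lps e + 0).
    rewrite (occ_shift_rev pal_lps); last lia.
    by rewrite (_ : _ + _ = q + (j - i)) //; lia.
  rewrite addn0 => occ_l; suff : ~~ occ f (e - lps e) by rewrite occ_l.
  by apply: no_occ; lia.
- have : occ z (e - lps e + 0).
    rewrite (occ_shift_rev pal_lps); last by rewrite size_z; lia.
    by rewrite size_z (_ : e - lps e + (lps e - len - 0) = q) //; lia.
  by rewrite addn0 => /q_min; lia.
- rewrite eq_len (_ : e - len = q) in pal_lps; last lia.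
  move: occ_zq; rewrite /occ size_z => /(mem_pair_eqVrev (mem_head z _)).
  by rewrite /is_pal -pal_lps => -[] ->; apply/eqP.
Qed.

End ReturnWords.

Section Extensions.
Variables (A : finType) (u : nat -> A).
Hypothesis rev_closed : closed_under_reversal u.

Lemma factor_rcons v x : factor u (rcons v x) -> factor u v.
Proof.
case=> i; rewrite size_rcons => def_v.
have : rcons v x = slice u i (size v).+1 := def_v.
by rewrite slice_rcons => /rcons_inj[-> _]; apply: factor_slice.
Qed.

Lemma factor_cons x v : factor u (x :: v) -> factor u v.
Proof.
case=> i def_v; have : x :: v = slice u i (size v).+1 := def_v.
by rewrite slice_cons => -[_ ->]; apply: factor_slice.
Qed.

Lemma factor_extend v : factor u v -> exists x, factor u (rcons v x).
Proof.
case=> i def_v; exists (u (i + size v)).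
have def_v' : v = slice u i (size v) := def_v.
by rewrite {1}def_v' -slice_rcons; apply: factor_slice.
Qed.

Variable w : seq A.

Lemma mem_Eboth a b : ((a, b) \in Eboth u w) = `[< factor u (a :: rcons w b) >].
Proof. by rewrite inE. Qed.

Lemma Eboth_Eleft ab : ab \in Eboth u w -> ab.1 \in Eleft u w.
Proof. by rewrite !inE -rcons_cons => /asboolP/factor_rcons/asboolP. Qed.

Lemma Eboth_Eright ab : ab \in Eboth u w -> ab.2 \in Eright u w.
Proof. by rewrite !inE => /asboolP/factor_cons/asboolP. Qed.

Lemma Eleft_Eboth a : a \in Eleft u w -> exists b, (a, b) \in Eboth u w.
Proof.
by rewrite inE => /asboolP/factor_extend[b]; exists b; rewrite mem_Eboth; apply/asboolP.
Qed.

Lemma Eright_Eboth b : b \in Eright u w -> exists a, (a, b) \in Eboth u w.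
Proof.
rewrite inE => /asboolP/rev_closed; rewrite rev_rcons => /factor_extend[a] /rev_closed.
by rewrite rev_rcons rev_cons revK => ext; exists a; rewrite mem_Eboth; apply/asboolP.
Qed.

Lemma Eboth_pal_sym a b : w = rev w -> (a, b) \in Eboth u w -> (b, a) \in Eboth u w.
Proof.
rewrite !mem_Eboth => pal_w /asboolP/rev_closed ext; apply/asboolP.
by move: ext; rewrite rev_cons rev_rcons -pal_w.
Qed.

Lemma Eright_pal : w = rev w -> Eright u w = Eleft u w.
Proof.
move=> pal_w; apply/setP => a; rewrite !inE; apply/asboolP/asboolP => /rev_closed.
  by rewrite rev_rcons -pal_w.
by rewrite rev_cons -pal_w.
Qed.

End Extensions.

Section TreeWalk.
Variables (V : finType) (X : nat -> V).

Definition walk_vertices m : {set V} := [set X j | j : 'I_m.+1].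

Definition walk_arcs m : {set V * V} :=
  \bigcup_(j < m | X j != X j.+1) [set (X j, X j.+1); (X j.+1, X j)].

Definition retracing m := forall s t, s < t <= m -> X s = X t ->
  (forall r, s < r < t -> X r != X s) -> X s.+1 = X t.-1.

Lemma walk_verticesP m v :
  reflect (exists2 j, j <= m & X j = v) (v \in walk_vertices m).
Proof.
apply: (iffP imsetP) => [[j _ ->] | [j le_jm <-]]; first by exists j; [rewrite -ltnS | ].
by exists (Ordinal (le_jm : j < m.+1)).
Qed.

Lemma walk_arcsP m x y : reflect
  (exists2 j, j < m & X j != X j.+1 /\ ((x, y) = (X j, X j.+1) \/ (x, y) = (X j.+1, X j)))
  ((x, y) \in walk_arcs m).
Proof.
apply: (iffP bigcupP) => [[j ne_j] | [j lt_jm [ne_j]]].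
  by rewrite !inE => /orP[]/eqP; exists j => //; tauto.
by move=> xy; exists (Ordinal lt_jm) => //; rewrite !inE; case: xy => ->; rewrite eqxx ?orbT.
Qed.

Lemma walk_vertices0 : walk_vertices 0 = [set X 0].
Proof.
apply/setP => v; rewrite inE; apply/walk_verticesP/eqP => [[j] | ->]; last by exists 0.
by rewrite leqn0 => /eqP-> <-.
Qed.

Lemma walk_arcs0 : walk_arcs 0 = set0.
Proof. by rewrite /walk_arcs big_ord0. Qed.

Lemma walk_verticesS m : walk_vertices m.+1 = X m.+1 |: walk_vertices m.
Proof.
apply/setP => v; rewrite in_setU1; apply/walk_verticesP/orP.
  move=> [j]; rewrite leq_eqVlt ltnS => /orP[/eqP-> <- | le_jm <-]; first by left.
  by right; apply/walk_verticesP; exists j.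
by move=> [/eqP->|/walk_verticesP[j le_jm <-]]; [exists m.+1 | exists j => //; lia].
Qed.

Lemma walk_arcsS m : walk_arcs m.+1 =
  (if X m != X m.+1 then [set (X m, X m.+1); (X m.+1, X m)] else set0) :|: walk_arcs m.
Proof. by rewrite /walk_arcs big_mkcond big_ord_recr /= -big_mkcond setUC. Qed.

Lemma walk_arcs_vertices m x y : (x, y) \in walk_arcs m ->
  (x \in walk_vertices m) && (y \in walk_vertices m).
Proof.
move=> /walk_arcsP[j lt_jm [_ [] [-> ->]]]; apply/andP; split; apply/walk_verticesP;
  by [exists j => //; lia | exists j.+1].
Qed.

Lemma retracing_le m m' : m' <= m -> retracing m -> retracing m'.
Proof. by move=> le_m ret s t lt_st; apply: ret; lia. Qed.

(* The last earlier visit s of X m.+1 starts a first return at m.+1, so the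
   walk left s along the arc it now comes back by. *)
Lemma revisit_arcs m : retracing m.+1 -> X m != X m.+1 -> X m.+1 \in walk_vertices m ->
  [set (X m, X m.+1); (X m.+1, X m)] \subset walk_arcs m.
Proof.
move=> ret ne_m /walk_verticesP visited.
have ub_s s : (s <= m) && (X s == X m.+1) -> s <= m by case/andP.
have [|s /andP[le_sm /eqP X_s] s_max] := ex_maxnP _ ub_s.
  by case: visited => s le_sm X_s; exists s; rewrite le_sm X_s eqxx.
have lt_sm : s < m.
  rewrite ltn_neqAle le_sm andbT; apply: contraNneq ne_m => eq_sm.
  by rewrite -X_s eq_sm.
have X_sS : X s.+1 = X m.
  apply: (ret s m.+1); [lia | done | move=> r lt_r].
  rewrite X_s; apply/negP => /eqP X_r.
  by have := s_max r; rewrite X_r eqxx andbT; lia.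
apply/subsetP => xy; rewrite !inE => /orP[]/eqP->; apply/walk_arcsP; exists s => //;
  by rewrite X_s X_sS eq_sym; tauto.
Qed.

Lemma card_walk_arcs m : retracing m -> #|walk_arcs m| + 2 = 2 * #|walk_vertices m|.
Proof.
elim: m => [|m IHm] ret; first by rewrite walk_arcs0 walk_vertices0 cards0 cards1.
have {IHm} := IHm (retracing_le (leqnSn m) ret).
rewrite walk_arcsS walk_verticesS; case: eqVneq => [eq_m | ne_m] /=.
  rewrite set0U (setUidPr _) // sub1set -eq_m; apply/walk_verticesP; by exists m.
case: (boolP (X m.+1 \in walk_vertices m)) => [old | new].
  by rewrite (setUidPr (revisit_arcs ret ne_m old)) (setUidPr _) // sub1set.
have fresh x : (x, X m.+1) \notin walk_arcs m /\ (X m.+1, x) \notin walk_arcs m.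
  by split; apply: contraNN new => /walk_arcs_vertices/andP[].
rewrite -setUA !cardsU1 !inE new (proj2 (fresh _)) (negbTE (proj1 (fresh _))).
by rewrite xpair_eqE (negbTE ne_m) /=; lia.
Qed.

End TreeWalk.

Lemma card_imsetU (aT rT : finType) (f g : aT -> rT) (X Y : {set aT}) :
  injective f -> injective g -> (forall x y, f x != g y) ->
  #|f @: X :|: g @: Y| = #|X| + #|Y|.
Proof.
move=> inj_f inj_g ne_fg; rewrite cardsU !card_imset // -[RHS]subn0; congr (_ - _).
apply/eqP; rewrite cards_eq0; apply/eqP/setP => z; rewrite !inE.
by apply/negP => /andP[/imsetP[x _ ->] /imsetP[y _ /eqP]]; rewrite (negbTE (ne_fg x y)).
Qed.

Section ExtensionWalk.
Variables (A : finType) (u : nat -> A) (N : nat).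
Hypothesis lps_unioccurrent : forall e x, N < e -> x + lps u e < e ->
  slice u x (lps u e) != slice u (e - lps u e) (lps u e).
Variables (w : seq A) (M : nat).
Hypothesis long_w : N < size w.

Local Notation n := (size w).
Local Notation slice := (slice u).
Local Notation occ := (occ u).

(* Positions start at 1 so that every occurrence has a letter [u k.-1] before it. *)
Definition occs := [seq k <- iota 1 M | occ w k].
Local Notation m := (size occs).
Definition pos j := nth 0 occs j.

Lemma mem_occs k : (k \in occs) = (0 < k <= M) && occ w k.
Proof. by rewrite mem_filter mem_iota andbC; congr (_ && _); lia. Qed.

Lemma pos_occ j : j < m -> 0 < pos j <= M /\ occ w (pos j).
Proof. by move=> lt_jm; have := mem_nth 0 lt_jm; rewrite mem_occs => /andP. Qed.

Lemma ltn_pos j j' : j < m -> j' < m -> (pos j < pos j') = (j < j').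
Proof.
have sorted_occs : sorted ltn occs.
  by apply: sorted_filter; [apply: ltn_trans | apply: iota_ltn_sorted].
move=> lt_jm lt_jm'; have homo := sorted_ltn_nth ltn_trans 0 sorted_occs.
case: (ltngtP j j') => [lt_jj' | gt_jj' | ->]; last by rewrite ltnn.
- by apply: homo; rewrite ?inE.
- by apply/negbTE; rewrite -leqNgt ltnW // homo ?inE.
Qed.

Lemma occs_index k : 0 < k <= M -> occ w k -> exists2 r, r < m & pos r = k.
Proof.
move=> k_range occ_k; have occs_k : k \in occs by rewrite mem_occs k_range.
by exists (index k occs); rewrite ?index_mem // /pos nth_index.
Qed.

Lemma pos_next j k : j.+1 < m -> pos j < k < pos j.+1 -> ~~ occ w k.
Proof.
move=> lt_jm lt_k; apply/negP => occ_k.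
have [/andP[_ le_M] _] := pos_occ lt_jm.
have [r lt_rm pos_r] := @occs_index k (ltac:(lia)) occ_k.
by move: lt_k; rewrite -pos_r !ltn_pos //; lia.
Qed.

Definition entry_vertex k := (slice k n == w, u k.-1).
Definition exit_vertex k := (rev (slice k n) == w, u (k + n)).

(* Vertex [j.+1] is where the [j]-th occurrence of [w] or [rev w] is left; by
   [ext_walk_lt] it is also where the [j.+1]-th one is entered. *)
Definition ext_walk j := if j is j'.+1 then exit_vertex (pos j') else entry_vertex (pos 0).

Lemma pal_window_vertices i j : i < j -> is_pal (slice i (j + n - i)) ->
  exit_vertex i = entry_vertex j.
Proof.
move=> lt_ij pal_ij; have /eqP/slice_shift_rev reflect_ij := pal_ij.
move/pal_sliceP: pal_ij => /(_ n) pal_n.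
rewrite /exit_vertex /entry_vertex -{1}(subnKC (ltnW lt_ij)) (reflect_ij (j - i) n); last lia.
rewrite (_ : j + n - i - n - (j - i) = 0) ?addn0 ?revK; last lia.
by rewrite pal_n; [congr (_, u _) | ]; lia.
Qed.

Lemma ext_walk_lt j : j < m -> ext_walk j = entry_vertex (pos j).
Proof.
case: j => [// | j] lt_jm /=; apply: pal_window_vertices; first by rewrite ltn_pos // ltnW.
apply: (consecutive_occ_pal lps_unioccurrent long_w).
split; first by rewrite ltn_pos // ltnW.
- exact: (pos_occ (ltnW lt_jm)).2.
- exact: (pos_occ lt_jm).2.
- by move=> k; apply: pos_next.
Qed.

Lemma occ_left_ext_vertices k j : 0 < k -> occ w k -> occ (slice k.-1 n.+1) j ->
  (occ w j.+1 /\ entry_vertex j.+1 = entry_vertex k) \/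
  (occ w j /\ exit_vertex j = entry_vertex k).
Proof.
move=> k_gt0 occ_k; rewrite {1}/occ size_slice (@slice_cons _ u k.-1) prednK // !inE.
case/orP => /eqP.
  by rewrite slice_cons => -[u_j slice_j]; left; rewrite /occ /entry_vertex /= slice_j u_j.
rewrite slice_rcons rev_cons => /rcons_inj[slice_j u_j]; right.
by rewrite /occ /exit_vertex /entry_vertex slice_j revK u_j rev_mem_pair.
Qed.

Lemma occ_left_ext_of_exit k j : 0 < k -> occ w k -> occ w j ->
  exit_vertex j = entry_vertex k -> occ (slice k.-1 n.+1) j.
Proof.
move=> k_gt0 occ_k occ_j [same_dir same_letter].
have slice_j : rev (slice j n) = slice k n.
  by apply: mem_pair_orient_inj same_dir; rewrite ?rev_mem_pair.
rewrite /occ size_slice (@slice_cons _ u k.-1) prednK // slice_rcons same_letter -slice_j.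
by rewrite rev_cons revK !inE eqxx orbT.
Qed.

(* Such an occurrence would bring the walk back to [ext_walk s] before step [t.+1]. *)
Lemma first_return_gap s t k : s < t < m ->
  (forall r, s < r <= t -> ext_walk r != ext_walk s) ->
  (pos s).-1 < k < pos t -> ~~ occ (slice (pos s).-1 n.+1) k.
Proof.
move=> /andP[lt_st lt_tm] first_ret lt_k; have lt_sm := ltn_trans lt_st lt_tm.
have [/andP[pos_s_gt0 _] occ_s] := pos_occ lt_sm.
have [/andP[_ le_M] _] := pos_occ lt_tm.
apply/negP => /(occ_left_ext_vertices pos_s_gt0 occ_s) [[occ_k left_k] | [occ_k right_k]].
- have [r lt_rm pos_r] := @occs_index k.+1 (ltac:(lia)) occ_k.
  have lt_sr : s < r by rewrite -(ltn_pos lt_sm lt_rm) pos_r; lia.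
  have le_rt : r <= t by rewrite leqNgt -(ltn_pos lt_tm lt_rm) pos_r; lia.
  by have := first_ret r; rewrite !ext_walk_lt ?pos_r ?left_k ?eqxx ?lt_sr; lia.
- have [r lt_rm pos_r] := @occs_index k (ltac:(lia)) occ_k.
  have le_sr : s <= r by rewrite leqNgt -(ltn_pos lt_rm lt_sm) pos_r; lia.
  have lt_rt : r < t by rewrite -(ltn_pos lt_rm lt_tm) pos_r; lia.
  by have := first_ret r.+1; rewrite /= ext_walk_lt ?pos_r ?right_k ?eqxx; lia.
Qed.

Lemma ext_walk_retracing : retracing ext_walk m.
Proof.
move=> s [// | t] /andP[lt_st lt_tm] same_st first_ret /=.
rewrite ltnS leq_eqVlt in lt_st; case/orP: lt_st => [/eqP eq_st | lt_st].
  by move: same_st; rewrite -eq_st => ->.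
have lt_sm := ltn_trans lt_st lt_tm.
have [/andP[pos_s_gt0 _] occ_s] := pos_occ lt_sm.
have [_ occ_t] := pos_occ lt_tm.
have lt_pos : pos s < pos t by rewrite ltn_pos.
rewrite ext_walk_lt //= in same_st.
have ret : consecutive_occ u (slice (pos s).-1 n.+1) (pos s).-1 (pos t).
  split; first lia.
  - by rewrite /occ size_slice mem_head.
  - exact: occ_left_ext_of_exit.
  - move=> k; apply: first_return_gap; first lia.
    by move=> r lt_r; apply: first_ret; lia.
have := consecutive_occ_pal lps_unioccurrent _ ret; rewrite size_slice => /(_ (ltac:(lia))).
rewrite (_ : _ - _ = (pos t + n - pos s).+2); last lia.
move/pal_slice_inner; rewrite prednK // => pal_st.
by rewrite ext_walk_lt // (pal_window_vertices lt_pos pal_st).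
Qed.

Hypothesis rev_closed : closed_under_reversal u.
Hypothesis early_ext : forall ab, ab \in Eboth u w ->
  exists2 i, i < M & slice i n.+2 = ab.1 :: rcons w ab.2.

(* The flag of a vertex tells whether its letter extends [w] on the left; for a
   palindromic [w] left and right extensions become the same vertices. *)
Definition lext_vertex (a : A) := (true, a).
Definition rext_vertex (b : A) := (rev w == w, b).

Definition nonloop_ext := [set ab in Eboth u w | lext_vertex ab.1 != rext_vertex ab.2].

Lemma occurrence_arc k : 0 < k -> occ w k -> exists2 ab, ab \in Eboth u w &
  entry_vertex k = lext_vertex ab.1 /\ exit_vertex k = rext_vertex ab.2 \/
  entry_vertex k = rext_vertex ab.2 /\ exit_vertex k = lext_vertex ab.1.
Proof.
move=> k_gt0; have := factor_slice u k.-1 n.+2.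
rewrite slice_cons prednK // slice_rcons /occ !inE => ext /orP[]/eqP slice_k;
  rewrite slice_k in ext; rewrite /entry_vertex /exit_vertex /lext_vertex /rext_vertex;
  rewrite slice_k ?revK eqxx.
  by exists (u k.-1, u (k + n)); [rewrite mem_Eboth; apply/asboolP | left].
exists (u (k + n), u k.-1); last by right.
by rewrite mem_Eboth; apply/asboolP; move: (rev_closed ext); rewrite rev_cons rev_rcons revK.
Qed.

Lemma ext_occurs ab : ab \in Eboth u w ->
  exists2 r, r < m & ext_walk r = lext_vertex ab.1 /\ ext_walk r.+1 = rext_vertex ab.2.
Proof.
move=> /early_ext[i lt_iM]; rewrite slice_cons slice_rcons => -[a_i /rcons_inj[slice_i b_i]].
have occ_i : occ w i.+1 by rewrite /occ slice_i mem_head.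
have [r lt_rm pos_r] := @occs_index i.+1 (ltac:(lia)) occ_i.
exists r => //; rewrite ext_walk_lt //= pos_r /entry_vertex /exit_vertex.
by rewrite /lext_vertex /rext_vertex slice_i -a_i -b_i addSnnS eqxx.
Qed.

Lemma ext_walk_vertices : 0 < m ->
  walk_vertices ext_walk m = lext_vertex @: Eleft u w :|: rext_vertex @: Eright u w.
Proof.
move=> m_gt0; apply/setP => v; apply/walk_verticesP/setUP => [[j le_jm <-] | ].
  have [r lt_rm ends] : exists2 r, r < m & ext_walk j \in [:: ext_walk r; ext_walk r.+1].
    case: (ltngtP j m) le_jm => [lt_jm _ | // | ->]; first by exists j; rewrite ?mem_head.
    by exists m.-1; rewrite ?prednK ?inE ?eqxx ?orbT //; lia.
  have [/andP[pos_gt0 _] occ_r] := pos_occ lt_rm.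
  have [ab ab_E arc] := occurrence_arc pos_gt0 occ_r.
  have [left_ab right_ab] := (Eboth_Eleft ab_E, Eboth_Eright ab_E).
  move: ends; rewrite (ext_walk_lt lt_rm) /= !inE.
  by case: arc => -[-> ->] /orP[]/eqP->; [left | right | right | left]; apply: imset_f.
case=> /imsetP[c c_E ->].
  have [b /ext_occurs[r lt_rm [walk_r _]]] := Eleft_Eboth c_E.
  by exists r => //; apply: ltnW.
have [a /ext_occurs[r lt_rm [_ walk_r]]] := Eright_Eboth rev_closed c_E.
by exists r.+1.
Qed.

Lemma ext_walk_arcs : walk_arcs ext_walk m =
  [set (lext_vertex ab.1, rext_vertex ab.2) | ab in nonloop_ext] :|:
  [set (rext_vertex ab.2, lext_vertex ab.1) | ab in nonloop_ext].
Proof.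
apply/setP => -[x y]; apply/walk_arcsP/setUP => [[j lt_jm [ne_j xy]] | ].
  have [/andP[pos_gt0 _] occ_j] := pos_occ lt_jm.
  have [ab ab_E arc] := occurrence_arc pos_gt0 occ_j.
  move: ne_j xy; rewrite ext_walk_lt //=.
  case: arc => -[-> ->] ne_j [] [-> ->]; [left | right | right | left]; apply/imsetP;
    by exists ab; rewrite // inE ab_E // eq_sym.
have arc_ab ab : ab \in nonloop_ext -> exists2 r, r < m & ext_walk r != ext_walk r.+1 /\
    ext_walk r = lext_vertex ab.1 /\ ext_walk r.+1 = rext_vertex ab.2.
  rewrite inE => /andP[ab_E ne_ab]; have [r lt_rm [walk_r walk_rS]] := ext_occurs ab_E.
  by exists r; rewrite ?walk_r ?walk_rS.
by case=> /imsetP[ab /arc_ab[r lt_rm [ne_r [walk_r walk_rS]]] [-> ->]]; exists r;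
  rewrite -?walk_r -?walk_rS; tauto.
Qed.

Lemma occs_gt0 : 0 < #|Eleft u w| -> 0 < m.
Proof.
case/card_gt0P => a /Eleft_Eboth[b /ext_occurs[r lt_rm _]].
exact: leq_ltn_trans (leq0n r) lt_rm.
Qed.

Lemma card_ext_tree : 0 < #|Eleft u w| ->
  #|walk_arcs ext_walk m| + 2 = 2 * #|lext_vertex @: Eleft u w :|: rext_vertex @: Eright u w|.
Proof.
move=> El_gt0; rewrite -ext_walk_vertices ?occs_gt0 //.
exact/card_walk_arcs/ext_walk_retracing.
Qed.

Lemma card_ext_nonpal : 0 < #|Eleft u w| -> w != rev w ->
  #|Eboth u w| + 1 = #|Eleft u w| + #|Eright u w|.
Proof.
move=> El_gt0 nonpal_w; have rext_false b : rext_vertex b = (false, b).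
  by rewrite /rext_vertex eq_sym (negbTE nonpal_w).
have inj_lext : injective lext_vertex by move=> a a' [].
have inj_rext : injective rext_vertex by move=> b b'; rewrite !rext_false => -[].
have nonloop_all : nonloop_ext = Eboth u w.
  by apply/setP => ab; rewrite inE /lext_vertex rext_false andbT.
have := card_ext_tree El_gt0; rewrite ext_walk_arcs nonloop_all !card_imsetU.
- set e := #|Eboth u w|; set l := #|Eleft u w|; set r := #|Eright u w|; lia.
- by move=> [a b] [a' b'] /pair_equal_spec[/inj_lext /= -> /inj_rext /= ->].
- by move=> [a b] [a' b'] /pair_equal_spec[/inj_rext /= -> /inj_lext /= ->].
- by move=> ab ab'; rewrite !rext_false.
- exact: inj_lext.
- exact: inj_rext.
- by move=> a b; rewrite rext_false.
Qed.

Lemma card_nonloop_pal : w = rev w -> #|nonloop_ext| + #|Eeq u w| = #|Eboth u w|.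
Proof.
move=> pal_w; have rext_true b : rext_vertex b = (true, b) by rewrite /rext_vertex -pal_w eqxx.
have inj_diag : injective (fun a : A => (a, a)) by move=> a a' [].
rewrite -[RHS](cardsID [set ab | ab.1 == ab.2]) addnC; congr (_ + _).
  rewrite -(card_imset _ inj_diag); apply: eq_card => -[a b].
  rewrite !inE; apply/imsetP/andP => [[c c_eq [-> ->]] | [ab_E /eqP /= eq_ab]].
    by rewrite /= eqxx; move: c_eq; rewrite inE.
  by rewrite -eq_ab in ab_E *; exists a; rewrite ?inE.
by apply: eq_card => -[a b]; rewrite !inE /lext_vertex rext_true xpair_eqE andbC.
Qed.

Lemma card_ext_pal : 0 < #|Eleft u w| -> w = rev w ->
  #|Eboth u w| + 2 = 2 * #|Eleft u w| + #|Eeq u w|.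
Proof.
move=> El_gt0 pal_w.
have rext_lext : rext_vertex =1 lext_vertex by move=> b; rewrite /rext_vertex -pal_w eqxx.
have inj_lext : injective lext_vertex by move=> a a' [].
have sym_arcs : [set (rext_vertex ab.2, lext_vertex ab.1) | ab in nonloop_ext] =
                [set (lext_vertex ab.1, rext_vertex ab.2) | ab in nonloop_ext].
  apply/setP => xy; apply/imsetP/imsetP => -[[a b] ab_in ->]; exists (b, a);
    rewrite /= ?rext_lext //; move: ab_in; rewrite !in_set /= !rext_lext eq_sym -!mem_Eboth;
    by case/andP => /(Eboth_pal_sym rev_closed pal_w) -> ->.
have := card_ext_tree El_gt0; rewrite ext_walk_arcs sym_arcs setUid card_imset; last first.
  move=> [a b] [a' b'] /pair_equal_spec[/inj_lext /= -> /=].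
  by rewrite !rext_lext => /inj_lext ->.
rewrite (Eright_pal rev_closed pal_w) (eq_imset _ rext_lext) setUid card_imset // => <-.
by rewrite -(card_nonloop_pal pal_w) addnAC.
Qed.

End ExtensionWalk.

Lemma factors_occur_before (A : finType) (u : nat -> A) (s : seq (seq A)) :
  {in s, forall v, factor u v} ->
  exists M, {in s, forall v, exists2 i, i < M & slice u i (size v) = v}.
Proof.
elim: s => [|v s IHs] factor_s; first by exists 0.
have [i def_v] := factor_s v (mem_head _ _).
have [M M_s] := IHs (fun x x_s => factor_s x (mem_behead (s := v :: s) x_s)).
exists (maxn i.+1 M) => x /predU1P[-> | /M_s[j lt_jM occ_j]].
  by exists i; [apply: leq_maxl | apply: esym def_v].
by exists j; first exact: leq_trans lt_jM (leq_maxr _ _).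
Qed.

Lemma early_extensions (A : finType) (u : nat -> A) (w : seq A) :
  exists M, forall ab, ab \in Eboth u w ->
    exists2 i, i < M & slice u i (size w).+2 = ab.1 :: rcons w ab.2.
Proof.
pose exts := [seq ab.1 :: rcons w ab.2 | ab <- enum (Eboth u w)].
have [|M M_exts] := @factors_occur_before _ u exts.
  by move=> v /mapP[[a b]]; rewrite mem_enum mem_Eboth => /asboolP fac ->.
exists M => ab ab_E; have := M_exts _ (map_f _ (_ : ab \in enum (Eboth u w))).
by rewrite /= size_rcons; apply; rewrite mem_enum.
Qed.

Theorem theorem21 (A : finType) (u : nat -> A) :
  closed_under_reversal u ->
  finite_defect u ->
  exists K : nat, forall w : seq A,
    bispecial u w -> K <= size w ->
    (w != rev w -> bilat_mult u w = 0%R) /\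
    (w = rev w -> bilat_mult u w = (#|Eeq u w|%:Z - 1)%R).
Proof.
move=> rev_closed /lps_eventually_unioccurrent[N lps_uni].
exists N.+1 => w [_ [El_ge2 _]] long_w; have [M early] := early_extensions u w.
have El_gt0 : 0 < #|Eleft u w| by apply: leq_trans El_ge2.
have card_nonpal := card_ext_nonpal lps_uni long_w rev_closed early El_gt0.
have card_pal := card_ext_pal lps_uni long_w rev_closed early El_gt0.
have card_Er : w = rev w -> #|Eright u w| = #|Eleft u w| by move/(Eright_pal rev_closed) ->.
rewrite /bilat_mult; split=> [/card_nonpal | pal_w]; first lia.
by move: (card_pal pal_w) (card_Er pal_w); lia.
Qed.
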